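(* Let $m\ge3$ and let $T_m$ be the set of permutations $\tau\in\mathcal{S}_m$ with $\tau_{m-1}=m$ and $\tau_m=m-1$. A permutation $\pi\in\mathcal{S}_n$ avoids every pattern in $T_m$ if and only if every element $(i,j)$ of its essential set $\mathcal{E}(\pi)$ has rank $\rho(i,j)\le m-3$.
   Context: A permutation $\pi\in\mathcal{S}_n$ avoids $\tau\in\mathcal{S}_k$ if there are no indices $i_1<\dots<i_k$ with $\pi_{i_1}\cdots\pi_{i_k}$ in the same relative order as $\tau_1\cdots\tau_k$. Represent $\pi$ by an $n\times n$ array, rows $i$ numbered top to bottom, columns $j$ left to right, with a dot in square $(i,\pi_i)$. The diagram $D(\pi)$ is the set of squares $(i,j)$ with $\pi_i>j$ and $\pi^{-1}(j)>i$. The essential set $\mathcal{E}(\pi)$ is the set of $(i,j)\in D(\pi)$ with $(i+1,j)\notin D(\pi)$ and $(i,j+1)\notin D(\pi)$ (squares outside the array count as not in $D(\pi)$). The rank of a square $(i,j)$ is $\rho(i,j)=\#\{k<i:\pi_k<j\}$. *)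

From mathcomp Require Import all_boot all_order all_fingroup.
Set Implicit Arguments. Unset Strict Implicit. Unset Printing Implicit Defensive.

(* Permutations of {1..n} are modelled as 'S_n = {perm 'I_n}, i.e. 0-based:
   row i (0-based) has its dot in column p i (0-based). *)

Definition contains (n k : nat) (p : 'S_n) (tau : 'S_k) : Prop :=
  exists f : 'I_k -> 'I_n,
    (forall a b : 'I_k, a < b -> f a < f b) /\
    (forall a b : 'I_k, (p (f a) < p (f b)) = (tau a < tau b)).

Definition avoids (n k : nat) (p : 'S_n) (tau : 'S_k) : Prop := ~ contains p tau.

(* T_m : tau_{m-1} = m and tau_m = m-1 (1-based), i.e. 0-based
   tau(m-2) = m-1 and tau(m-1) = m-2. *)
Definition in_Tm (m : nat) (tau : 'S_m) : Prop :=
  forall i : 'I_m,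
    (val i = m - 2 -> val (tau i) = m - 1) /\
    (val i = m - 1 -> val (tau i) = m - 2).

(* Diagram: squares (i,j) with pi_i > j and pi^{-1}(j) > i (0-based; squares
   outside the array are not in the diagram). *)
Definition in_diagram (n : nat) (p : 'S_n) (i j : nat) : bool :=
  [exists a : 'I_n, [exists b : 'I_n,
     [&& val a == i, val b == j, b < p a & a < (p^-1)%g b]]].

Definition in_essential (n : nat) (p : 'S_n) (i j : nat) : bool :=
  [&& in_diagram p i j, ~~ in_diagram p i.+1 j & ~~ in_diagram p i j.+1].

Definition rank (n : nat) (p : 'S_n) (i j : nat) : nat :=
  #|[set k : 'I_n | (val k < i) && (val (p k) < j)]|.

From mathcomp Require Import all_boot all_order all_fingroup.
From mathcomp Require Import zify.

Set Implicit Arguments.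
Unset Strict Implicit.
Unset Printing Implicit Defensive.

(* The cells of the diagram are the cells (a, p b) of the inversions a < b,
   p b < p a.  An occurrence of a pattern of T_m ends with such an inversion,
   and its first m - 2 entries lie to the left of a and below p b; conversely
   any m - 2 points counted by the rank of (a, p b), followed by a and b, form
   an occurrence of a pattern of T_m.  So p contains a pattern of T_m iff some
   diagram cell has rank at least m - 2.  Since the rank is monotone in both
   coordinates and a diagram cell can be moved down or right inside the
   diagram until it becomes essential, this happens iff some essential cell
   has rank at least m - 2. *)

Lemma ord_homo_ltn_inj k n (f : 'I_k -> 'I_n) :
  {homo f : a b / a < b} -> injective f.
Proof.
move=> f_inc a b fab; apply/val_inj.
by case: (ltngtP a b) => // /f_inc; rewrite fab ltnn.
Qed.

Lemma card_ord_ltn m k : k <= m -> #|[set y : 'I_m | y < k]| = k.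
Proof.
move=> le_km; have widen_inj : injective (widen_ord le_km).
  by move=> x y /(congr1 val) => /= /val_inj.
have -> : [set y : 'I_m | y < k] = widen_ord le_km @: setT.
  apply/setP => y; rewrite inE; apply/idP/imsetP => [lt_yk | [z _ ->]].
    by exists (Ordinal lt_yk); last exact: val_inj.
  exact: (ltn_ord z).
by rewrite card_imset // cardsT card_ord.
Qed.

Lemma nth_enum_set_ltn n (S : {set 'I_n}) x0 r1 r2 :
  r1 < r2 < #|S| -> nth x0 (enum S) r1 < nth x0 (enum S) r2.
Proof.
move=> /andP [lt12 lt2S].
have ltn_trans' : transitive (relpre (@nat_of_ord n) ltn).
  by move=> y x z; apply: ltn_trans.
have sortedS : sorted (relpre (@nat_of_ord n) ltn) (enum S).
  have -> : enum S = filter (mem S) (enum 'I_n) by rewrite enumT.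
  apply: sorted_filter => //.
  by rewrite -sorted_map val_enum_ord iota_ltn_sorted.
by apply: (sorted_ltn_nth ltn_trans') => //; rewrite inE -cardE ?(ltn_trans lt12).
Qed.

Lemma contains_standardization k n (p : 'S_n) (f : 'I_k -> 'I_n) :
  {homo f : a b / a < b} ->
  exists2 tau : 'S_k, contains p tau &
    forall x, val (tau x) = #|[set y | p (f y) < p (f x)]|.
Proof.
move=> f_inc; pose v x := val (p (f x)).
have v_inj : injective v.
  by move=> x y /val_inj /perm_inj /(ord_homo_ltn_inj f_inc).
pose below x := [set y | v y < v x].
have below_lt x : #|below x| < k.
  rewrite -[k in _ < k]card_ord -cardsT; apply/proper_card/properP.
  by split; [exact: subsetT | exists x; rewrite !inE ?ltnn].
pose g x := Ordinal (below_lt x).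
have g_mono x y : (g x < g y) = (v x < v y).
  rewrite /=; case: (ltnP (v x) (v y)) => [lt_xy | le_yx].
    apply/proper_card/properP; split.
      by apply/subsetP => z; rewrite !inE => /ltn_trans; apply.
    by exists x; rewrite !inE ?lt_xy ?ltnn.
  rewrite ltnNge subset_leq_card //; apply/subsetP => z.
  by rewrite !inE => /leq_trans; apply.
have g_inj : injective g.
  move=> x y gxy; apply: v_inj; have := g_mono x y; have := g_mono y x.
  by rewrite gxy ltnn; case: ltngtP.
by exists (perm g_inj) => [|x]; [exists f; split => // x y | ]; rewrite !permE.
Qed.

Lemma in_diagramP n (p : 'S_n) i j :
  reflect (exists a b : 'I_n, [/\ val a = i, val (p b) = j, a < b & p b < p a])
          (in_diagram p i j).
Proof.
apply: (iffP existsP) => [[a /existsP [c /and4P [/eqP ai /eqP cj lt_ca lt_a]]] | ].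
  by exists a, ((p^-1)%g c); rewrite permKV.
move=> [a [b [ai bj lt_ab lt_pba]]]; exists a; apply/existsP; exists (p b).
by rewrite permK ai bj lt_ab lt_pba !eqxx.
Qed.

Lemma in_diagram_ltn n (p : 'S_n) i j : in_diagram p i j -> i < n /\ j < n.
Proof. by case/in_diagramP => a [b [<- <- _ _]]; split; apply: ltn_ord. Qed.

Lemma leq_rank n (p : 'S_n) i j i' j' :
  i <= i' -> j <= j' -> rank p i j <= rank p i' j'.
Proof.
move=> le_i le_j; apply/subset_leq_card/subsetP => k; rewrite !inE.
by case/andP => lt_ki lt_pkj; rewrite (leq_trans lt_ki) // (leq_trans lt_pkj).
Qed.

Lemma in_diagram_essential n (p : 'S_n) i j : in_diagram p i j ->
  exists i' j', in_essential p i' j' /\ rank p i j <= rank p i' j'.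
Proof.
move: {2}(n - i + (n - j)) (leqnn (n - i + (n - j))) => d.
elim: d i j => [|d IHd] i j le_d diag_ij; have [lt_in lt_jn] := in_diagram_ltn diag_ij.
  lia.
have [down | ] := boolP (in_diagram p i.+1 j).
  have [i' [j' [ess le_rank]]] := IHd i.+1 j ltac:(lia) down.
  by exists i', j'; rewrite (leq_trans _ le_rank) ?leq_rank.
have [right | ] := boolP (in_diagram p i j.+1).
  have [i' [j' [ess le_rank]]] := IHd i j.+1 ltac:(lia) right.
  by exists i', j'; rewrite (leq_trans _ le_rank) ?leq_rank.
by exists i, j; rewrite /in_essential diag_ij; split => //; apply/and3P.
Qed.

Lemma contains_Tm_diagram_rank m n (p : 'S_n) (tau : 'S_m) :
  2 <= m -> in_Tm tau -> contains p tau ->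
  exists i j, in_diagram p i j /\ m - 2 <= rank p i j.
Proof.
move=> m2 tauT [f [f_inc f_iso]].
have lt_a : m - 2 < m by lia.
have lt_b : m - 1 < m by lia.
pose ia := Ordinal lt_a; pose ib := Ordinal lt_b.
have tau_a : val (tau ia) = m - 1 by apply: (tauT ia).1.
have tau_b : val (tau ib) = m - 2 by apply: (tauT ib).2.
have tau_small (r : 'I_m) : r < m - 2 -> tau r < m - 2.
  move=> lt_r; have := ltn_ord (tau r).
  have : tau r != tau ia by rewrite (inj_eq perm_inj) -val_eqE /=; lia.
  have : tau r != tau ib by rewrite (inj_eq perm_inj) -val_eqE /=; lia.
  rewrite -!val_eqE tau_a tau_b /=; lia.
exists (f ia), (p (f ib)); split.
  apply/in_diagramP; exists (f ia), (f ib); split => //; first by apply: f_inc => /=; lia.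
  by rewrite f_iso tau_a tau_b; lia.
rewrite -{1}(card_ord_ltn (leq_subr 2 m)) -(card_imset _ (ord_homo_ltn_inj f_inc)).
apply/subset_leq_card/subsetP => _ /imsetP [r + ->]; rewrite !inE => lt_r.
by rewrite f_inc ?f_iso ?tau_b ?tau_small.
Qed.

Lemma diagram_rank_contains_Tm m n (p : 'S_n) i j :
  2 <= m -> in_diagram p i j -> m - 2 <= rank p i j ->
  exists2 tau : 'S_m, in_Tm tau & contains p tau.
Proof.
move=> m2 /in_diagramP [a [b [<- <- lt_ab lt_pba]]]; rewrite /rank.
set S := [set k | _] => big.
pose g r := nth a (enum S) r.
have g_S r : r < m - 2 -> (g r < a) && (p (g r) < p b).
  move=> lt_r; suff : g r \in S by rewrite inE.
  by rewrite -mem_enum mem_nth // -cardE (leq_trans lt_r).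
pose f (r : 'I_m) := if r < m - 2 then g r else if r == m - 2 :> nat then a else b.
have f_inc : {homo f : x y / x < y}.
  move=> x y lt_xy; rewrite /f; case: ifP => lt_x.
    case: ifP => lt_y; first by apply: nth_enum_set_ltn; rewrite lt_xy (leq_trans lt_y).
    have /andP [lt_xa _] := g_S _ lt_x.
    by case: ifP => _ //; apply: ltn_trans lt_ab.
  move/negbT: lt_x => ge_x; have lt_ym := ltn_ord y.
  have -> : (y < m - 2) = false by apply/negbTE; lia.
  have -> : (y == m - 2 :> nat) = false by apply/negbTE; lia.
  have -> : (x == m - 2 :> nat) by lia.
  exact: lt_ab.
have [tau p_tau tau_val] := contains_standardization p f_inc.
exists tau => // x.
have below_b y : (p (f y) < p b) = (y < m - 2).
  rewrite /f; case: ifP => [lt_y | _]; first by have /andP [] := g_S _ lt_y.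
  by case: ifP => _; rewrite ?ltnn // ltnNge ltnW.
have below_a y : (p (f y) < p a) = (y != m - 2 :> nat).
  rewrite /f; case: ifP => [lt_y | _].
    have /andP [_ lt_gb] := g_S _ lt_y.
    by rewrite (ltn_trans lt_gb lt_pba) neq_ltn lt_y.
  by case: ifP => _; rewrite ?ltnn ?lt_pba.
split => [x_a | x_b]; rewrite tau_val.
  have -> : f x = a by rewrite /f x_a ltnn eqxx.
  have -> : [set y | p (f y) < p a] = [set~ x].
    by apply/setP => y; rewrite !inE below_a -x_a val_eqE.
  by rewrite cardsC1 card_ord subn1.
have -> : f x = b by rewrite /f x_b !ifF //; apply/negbTE; lia.
have -> : [set y | p (f y) < p b] = [set y : 'I_m | y < m - 2].
  by apply/setP => y; rewrite !inE below_b.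
exact: card_ord_ltn (leq_subr 2 m).
Qed.

Theorem theorem5p1 (m n : nat) (p : 'S_n) :
  3 <= m ->
  ((forall tau : 'S_m, in_Tm tau -> avoids p tau) <->
   (forall i j : nat, in_essential p i j -> rank p i j <= m - 3)).
Proof.
move=> m3; have m2 : 2 <= m by apply: ltnW.
split => [avoids_Tm i j ess_ij | small_ess tau tauT p_tau].
  rewrite leqNgt; apply/negP => big.
  have diag_ij : in_diagram p i j by case/and3P: ess_ij.
  have [tau tauT p_tau] := diagram_rank_contains_Tm m2 diag_ij ltac:(lia).
  exact: avoids_Tm tau tauT p_tau.
have [i [j [diag_ij big]]] := contains_Tm_diagram_rank m2 tauT p_tau.
have [i' [j' [ess le_rank]]] := in_diagram_essential diag_ij.
have := small_ess _ _ ess; lia.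
Qed.
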